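(* Let the polynomials $L_h(z)$, $h\ge 0$, be defined by $L_0(z)=z$, $L_1(z)=z^2$ and $L_{h+2}(z)=L_{h+1}(z)\bigl(L_{h+1}(z)+L_h(z)\bigr)$ for all $h\ge 0$. For each $h$, let $\gamma_h$ be the unique positive real solution of $L_h(z)=1/2$. Let $\ell_n$ be the coefficient of $z^n$ in $L(z)=\sum_{h\ge0}L_h(z)$. Then the limit $\gamma=\lim_{h\to\infty}\gamma_h=0.67418\ldots$ exists, and \[\log_2(\ell_n)=n\log_2(\gamma^{-1})+\log\theta(n),\qquad n\log_2(\gamma^{-1})=n(0.568\ldots),\] for a function $\theta$ growing at most sub-exponentially, i.e. $\theta(n)=o(\kappa^n)$ for every $\kappa>1$.
   Context: $L_h(z)$ is the generating function of Left-Leaning AVL trees of height $h$ (AVL trees in which at every node the left subtree's height is at least the right subtree's height), and $\ell_n$ is the corresponding counting sequence of Left-Leaning AVL trees. *)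

From HB Require Import structures.
From mathcomp Require Import all_boot all_order all_algebra.
From mathcomp Require Import all_classical all_reals all_analysis.
Set Implicit Arguments. Unset Strict Implicit. Unset Printing Implicit Defensive.
Import Order.TTheory GRing.Theory Num.Theory.
Local Open Scope ring_scope.

(* Lpair h = (L_h, L_{h+1}) *)
Fixpoint Lpair (h : nat) : {poly int} * {poly int} :=
  match h with
  | 0%N => ('X, 'X ^+ 2)
  | h'.+1 => let: (a, b) := Lpair h' in (b, b * (b + a))
  end.

Definition L (h : nat) : {poly int} := (Lpair h).1.

Lemma L0 : L 0 = 'X. Proof. by []. Qed.
Lemma L1 : L 1 = 'X ^+ 2. Proof. by []. Qed.
Lemma LSS h : L h.+2 = L h.+1 * (L h.+1 + L h).
Proof. rewrite /L /=. by case: (Lpair h). Qed.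

Definition Lr (R : realType) (h : nat) : {poly R} := map_poly intr (L h).

(* ell n = coefficient of z^n in L(z) = sum_{h>=0} L_h(z).
   Since z^{h+1} divides L_h, only h <= n contribute. *)
Definition ell (n : nat) : int := \sum_(h < n.+1) (L h)`_n.

Definition log2 (R : realType) (x : R) : R := ln x / ln 2.

From Stdlib Require Import NArith.
From HB Require Import structures.
From mathcomp Require Import all_boot all_order all_algebra.
From mathcomp Require Import all_classical all_reals all_analysis.
From mathcomp Require Import ring lra zify.
Set Implicit Arguments. Unset Strict Implicit. Unset Printing Implicit Defensive.
Import Order.TTheory GRing.Theory Num.Theory numFieldNormedType.Exports.
Local Open Scope classical_set_scope.
Local Open Scope ring_scope.

(* For z >= 0 write L_h for L_h(z).  The recurrence
   L_(h+2) = L_(h+1) (L_(h+1) + L_h) has two absorbing regimes: once two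
   consecutive values satisfy L_h <= 1/2 and L_(h+1) < 1/2, the sequence decays
   geometrically with ratio L_(h+1) + 1/2 < 1 (z is subcritical), and once
   L_h >= 1/2 and L_(h+1) > 1/2 it stays above 1/2 (z is supercritical).  A
   point in neither regime has 1/3 <= L_h <= 1 for all h >= 2, and the scaling
   inequality r^(h+1) L_h(x) <= L_h(r x) shows that there is at most one such
   point.  Hence gamma, the supremum of the subcritical points, separates the
   two regimes, the roots gamma_h of L_h = 1/2 are squeezed to gamma, and for
   subcritical e arbitrarily close to gamma the bound
   ell_n e^n <= sum_h L_h(e) < oo makes theta(n) = ell_n gamma^n
   sub-exponential.  The numerical bounds are checked
   with integer interval arithmetic at scale 10^12: iterating the recurrence
   with outward rounding shows that 0.67418 is subcritical and 0.674185 is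
   supercritical. *)

(* The semiring-closed structure of the nonnegative numbers is declared on
   [nneg_num_pred], not on the qualifier [Num.nneg], so [rpredM] etc. only
   apply to [polyOver] of the former. *)
Local Notation nneg_poly := (polyOver Num.Def.nneg_num_pred).

Section NonnegPoly.
Variables (R : numDomainType) (p : {poly R}).
Hypothesis p_nneg : p \is a nneg_poly.

Let coef_ge0 i : 0 <= p`_i.
Proof. exact: (polyOverP p_nneg). Qed.

Lemma horner_nneg_ge0 (x : R) : 0 <= x -> 0 <= p.[x].
Proof.
move=> x0; rewrite horner_coef; apply: sumr_ge0 => i _.
by rewrite mulr_ge0 ?exprn_ge0 ?coef_ge0.
Qed.

Lemma horner_nneg_le (x y : R) : 0 <= x -> x <= y -> p.[x] <= p.[y].
Proof.
move=> x0 xy; rewrite !horner_coef; apply: ler_sum => i _.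
by rewrite ler_wpM2l ?coef_ge0 ?lerXn2r ?nnegrE ?(le_trans x0).
Qed.

Lemma coef_exp_le_horner (x : R) n : 0 <= x -> p`_n * x ^+ n <= p.[x].
Proof.
move=> x0; pose N := maxn (size p) n.+1.
rewrite (@horner_coef_wide _ N) ?leq_maxl //.
have ltnN : (n < N)%N by rewrite leq_max ltnSn orbT.
rewrite (bigD1 (Ordinal ltnN)) //= lerDl; apply: sumr_ge0 => i _.
by rewrite mulr_ge0 ?exprn_ge0 ?coef_ge0.
Qed.

End NonnegPoly.

Lemma coefM_ge_term (R : numDomainType) (p q : {poly R}) j n :
  p \is a nneg_poly -> q \is a nneg_poly ->
  (j <= n)%N -> p`_j * q`_(n - j) <= (p * q)`_n.
Proof.
move=> /polyOverP p_ge0 /polyOverP q_ge0 jn; rewrite coefM.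
rewrite (bigD1 (Ordinal (jn : (j < n.+1)%N))) //= lerDl.
by apply: sumr_ge0 => k _; apply: mulr_ge0; [exact: p_ge0 | exact: q_ge0].
Qed.

Lemma L_nneg h : L h \is a nneg_poly.
Proof.
suff [] : L h \is a nneg_poly /\ L h.+1 \is a nneg_poly by [].
elim: h => [|h [IH1 IH2]]; first by rewrite L0 L1 rpredX polyOverX.
by rewrite LSS rpredM ?rpredD.
Qed.

Lemma L_coef_ge0 h n : 0 <= (L h)`_n.
Proof. exact: (polyOverP (L_nneg h)). Qed.

(* The exponents of L_h fill (2^(h-1), 2^h].  For n in (2^(h+1), 2^(h+2)] the
   coefficient of z^n in L_(h+2) gets a positive term from L_(h+1) L_h via
   n = (2^h + 1) + 2^h if n = 2^(h+1) + 1, and from L_(h+1)^2 via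
   n = n/2 + (n - n/2) otherwise. *)
Lemma L_coef_gt0 h n : (2 ^ h < n.*2 <= 2 ^ h.+1)%N -> 0 < (L h)`_n.
Proof.
move: n; suff [P _] : (forall n, (2 ^ h < n.*2 <= 2 ^ h.+1)%N -> 0 < (L h)`_n) /\
       (forall n, (2 ^ h.+1 < n.*2 <= 2 ^ h.+2)%N -> 0 < (L h.+1)`_n) by exact: P.
elim: h => [|h [IH1 IH2]].
  split=> n Hn; [have -> : n = 1%N by lia | have -> : n = 2%N by lia].
    by rewrite L0 coefX.
  by rewrite L1 coefXn.
split=> // n Hn; rewrite LSS mulrDr coefD.
have nn h' := L_nneg h'.
have coefM_ge0 h1 h2 m : 0 <= (L h1 * L h2)`_m by exact: (polyOverP (rpredM (nn h1) (nn h2))).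
have [->|n_neq] := eqVneq n (2 ^ h.+1).+1.
  apply: ltr_wpDl; first exact: coefM_ge0.
  apply: lt_le_trans (coefM_ge_term (j := (2 ^ h).+1) (nn _) (nn _) _); last by rewrite expnS; lia.
  by rewrite mulr_gt0 ?IH1 ?IH2 //; rewrite !expnS; lia.
apply: ltr_pwDl; last exact: coefM_ge0.
apply: lt_le_trans (coefM_ge_term (j := n %/ 2) (nn _) (nn _) _); last by lia.
by rewrite mulr_gt0 ?IH2 //; move: n_neq Hn; rewrite !expnS; lia.
Qed.

Lemma ell_ge0 n : 0 <= ell n.
Proof. by apply: sumr_ge0 => h _; exact: L_coef_ge0. Qed.

Lemma ell_gt0 n : (0 < n)%N -> 0 < ell n.
Proof.
move=> n0; set h := up_log 2 n.
have hn : (h < n.+1)%N by rewrite ltnS up_log_min // ltnW // ltn_expl.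
have range : (2 ^ h < n.*2 <= 2 ^ h.+1)%N.
  have double : up_log 2 n.*2 = h.+1 by rewrite up_log2_double.
  rewrite -double up_logP // andbT -[h]/(h.+1.-1) -double up_log_gtn //.
  by rewrite -addnn; lia.
rewrite /ell (bigD1 (Ordinal hn)) //= ltr_pwDl ?L_coef_gt0 //.
by apply: sumr_ge0 => i _; exact: L_coef_ge0.
Qed.

Section Evaluation.
Variable R : realType.
Local Notation Lv h z := (Lr R h).[z].

Lemma Lr_nneg h : Lr R h \is a nneg_poly.
Proof. by apply/polyOverP => i; rewrite coef_map /= [_ \in _]ler0z L_coef_ge0. Qed.

Lemma horner_Lr0 (z : R) : Lv 0 z = z.
Proof. by rewrite /Lr L0 map_polyX hornerX. Qed.

Lemma horner_Lr1 (z : R) : Lv 1 z = z ^+ 2.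
Proof. by rewrite /Lr L1 rmorphXn /= map_polyX hornerXn. Qed.

Lemma horner_LrSS h (z : R) : Lv h.+2 z = Lv h.+1 z * (Lv h.+1 z + Lv h z).
Proof. by rewrite /Lr LSS rmorphM rmorphD /= hornerM hornerD. Qed.

Lemma horner_Lr_ge0 h (z : R) : 0 <= z -> 0 <= Lv h z.
Proof. exact/horner_nneg_ge0/Lr_nneg. Qed.

Lemma horner_Lr_le h (x y : R) : 0 <= x -> x <= y -> Lv h x <= Lv h y.
Proof. exact/horner_nneg_le/Lr_nneg. Qed.

Lemma horner_Lr_scale h (r x : R) : 1 <= r -> 0 <= x ->
  r ^+ h.+1 * Lv h x <= Lv h (r * x).
Proof.
move=> r1 x0; have r0 : 0 <= r by apply: le_trans r1.
suff [] : r ^+ h.+1 * Lv h x <= Lv h (r * x) /\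
          r ^+ h.+2 * Lv h.+1 x <= Lv h.+1 (r * x) by [].
elim: h => [|h [IH1 IH2]].
  by rewrite !horner_Lr0 !horner_Lr1 expr1 exprMn mulrC.
split=> //; rewrite !horner_LrSS.
set A := Lv h.+1 x in IH2 *; set B := Lv h x.
have A0 : 0 <= A by exact: horner_Lr_ge0.
have B0 : 0 <= B by exact: horner_Lr_ge0.
have sum_le : r ^+ h.+1 * (A + B) <= Lv h.+1 (r * x) + Lv h (r * x).
  rewrite mulrDr lerD // (le_trans _ IH2) // ler_wpM2r // ler_weXn2l //.
apply: le_trans (ler_pM _ _ IH2 sum_le); last 2 first.
- by rewrite mulr_ge0 ?exprn_ge0.
- by rewrite mulr_ge0 ?exprn_ge0 ?addr_ge0.
rewrite [leRHS]mulrACA -exprD ler_wpM2r ?mulr_ge0 ?addr_ge0 // ler_weXn2l //.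
by rewrite addSn addnS !ltnS leq_addl.
Qed.

End Evaluation.

Section Criticality.
Variable R : realType.
Local Notation Lv h z := (Lr R h).[z].

Definition subcritical (z : R) := exists h, Lv h z <= 2^-1 /\ Lv h.+1 z < 2^-1.
Definition supercritical (z : R) := exists h, 2^-1 <= Lv h z /\ 2^-1 < Lv h.+1 z.
Definition critical (z : R) := ~ subcritical z /\ ~ supercritical z.

Lemma horner_Lr_geometric h (z : R) : 0 <= z -> Lv h z <= 2^-1 -> Lv h.+1 z < 2^-1 ->
  forall k, Lv (h.+1 + k) z <= Lv h.+1 z * (Lv h.+1 z + 2^-1) ^+ k.
Proof.
move=> z0 Lh Lh1; set c := Lv h.+1 z in Lh1 *; set q := c + 2^-1.
have c0 : 0 <= c by exact: horner_Lr_ge0.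
have [q0 q1] : 0 <= q /\ q <= 1 by rewrite /q; split; lra.
have cqk_le_c k : c * q ^+ k <= c by rewrite ler_piMr ?exprn_ile1.
suff inv k : Lv (h + k) z <= 2^-1 /\ Lv (h.+1 + k) z <= c * q ^+ k.
  by move=> k; case: (inv k).
elim: k => [|k [IH1 IH2]]; first by rewrite !addn0 expr0 mulr1; split=> //; exact: ltW.
have Lk1_le_c := le_trans IH2 (cqk_le_c k).
have -> : (h.+1 + k.+1 = (h + k).+2)%N by rewrite addSn addnS.
rewrite addnS -addSn; split; first by apply: le_trans Lk1_le_c _; lra.
rewrite horner_LrSS -addSn exprS mulrCA mulrC.
apply: ler_pM; rewrite ?addr_ge0 ?horner_Lr_ge0 //.
exact: lerD.
Qed.

Lemma subcritical_eventually_lt_half (z : R) : 0 <= z -> subcritical z ->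
  \forall k \near \oo, Lv k z < 2^-1.
Proof.
move=> z0 [h [Lh Lh1]]; near=> k.
have hk : (h.+1 <= k)%N by near: k; exact: nbhs_infty_ge.
rewrite -(subnKC hk).
apply: (le_lt_trans (horner_Lr_geometric z0 Lh Lh1 (k - h.+1))).
apply: le_lt_trans (Lh1); rewrite ler_piMr ?horner_Lr_ge0 ?exprn_ile1 //.
  by rewrite addr_ge0 ?horner_Lr_ge0.
lra.
Unshelve. all: by end_near. Qed.

Lemma subcritical_sum_bounded (z : R) : 0 <= z -> subcritical z ->
  exists C, forall N, \sum_(i < N) Lv i z <= C.
Proof.
move=> z0 [h [Lh Lh1]]; set c := Lv h.+1 z in Lh1; set q := c + 2^-1.
have c0 : 0 <= c by exact: horner_Lr_ge0.
have [q0 q1] : 0 < q /\ q < 1 by rewrite /q; split; lra.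
exists (\sum_(i < h.+1) Lv i z + c * (1 - q)^-1) => N.
have Lge0 i : 0 <= Lv i z by exact: horner_Lr_ge0.
apply: (@le_trans _ _ (\sum_(i < h.+1 + N) Lv i z)).
  rewrite addnC big_split_ord /= lerDl; exact: sumr_ge0.
rewrite big_split_ord /= lerD2l.
apply: le_trans (geometric_le_lim N c0 q0 _); last by rewrite ger0_norm ?ltW.
rewrite seriesEord; apply: ler_sum => k _; exact: horner_Lr_geometric.
Qed.

Lemma supercritical_eventually_gt_half (z : R) : 0 <= z -> supercritical z ->
  \forall k \near \oo, 2^-1 < Lv k z.
Proof.
move=> z0 [h [Lh Lh1]].
have inv k : 2^-1 <= Lv (h + k) z /\ 2^-1 < Lv (h + k).+1 z.
  elim: k => [|k [IH1 IH2]]; first by rewrite addn0.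
  rewrite addnS horner_LrSS; split; first exact: ltW.
  move: IH1 IH2; move: (Lv (h + k).+1 z) (Lv (h + k) z) => A B; nra.
near=> k; have hk : (h.+1 <= k)%N by near: k; exact: nbhs_infty_ge.
by rewrite -(subnKC hk); case: (inv (k - h.+1)%N) => _; rewrite -addSn.
Unshelve. all: by end_near. Qed.

Lemma not_supercritical_le1 (z : R) : 0 <= z -> ~ supercritical z ->
  forall h, Lv h.+1 z <= 1.
Proof.
move=> z0 Nsup h; have [|Lh1_gt] := lerP (Lv h.+1 z) (2^-1); first lra.
have : Lv h.+2 z <= 2^-1.
  by rewrite leNgt; apply/negP => Lh2_gt; apply: Nsup; exists h.+1; rewrite ltW.
(* L_(h+1)^2 <= L_(h+2) <= 1/2 *)
rewrite horner_LrSS; have := horner_Lr_ge0 h z0.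
move: Lh1_gt (Lv h.+1 z) (Lv h z) => _ A B; nra.
Qed.

Lemma critical_ge_third (z : R) : 0 <= z -> critical z -> forall h, 3^-1 <= Lv h.+2 z.
Proof.
move=> z0 [Nsub Nsup] h; have [Lh2_ge|Lh2_lt] := lerP (2^-1) (Lv h.+2 z); first lra.
have : 2^-1 <= Lv h.+3 z.
  by rewrite leNgt; apply/negP => Lh3_lt; apply: Nsub; exists h.+2; rewrite ltW.
(* 1/2 <= a (a + L_(h+1)) <= a (a + 1) forces a = L_(h+2) > 1/3 *)
rewrite horner_LrSS; have := not_supercritical_le1 z0 Nsup h.
have := horner_Lr_ge0 h.+2 z0; have := horner_Lr_ge0 h.+1 z0.
move: Lh2_lt (Lv h.+2 z) (Lv h.+1 z) => _ C A; nra.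
Qed.

Lemma critical_unique (x y : R) : 0 < x -> x < y -> critical x -> critical y -> False.
Proof.
move=> x0 xy critx [_ Nsupy].
have y0 : 0 < y by apply: lt_trans xy.
have r1 : 1 <= y / x by rewrite ler_pdivlMr // mul1r ltW.
have ratio_le3 h : (y / x) ^+ h.+3 <= 3.
  have := horner_Lr_scale h.+2 r1 (ltW x0); rewrite divfK ?gt_eqF //.
  move/le_trans/(_ (not_supercritical_le1 (ltW y0) Nsupy h.+1)).
  have := critical_ge_third (ltW x0) critx h.
  have := exprn_ge0 h.+3 (le_trans ler01 r1).
  move: (_ ^+ h.+3) (Lv h.+2 x) => p a; nra.
have : `|x / y| < 1 by rewrite ger0_norm ?divr_ge0 ?ltW // ltr_pdivrMr // mul1r.
move/cvg_expr/cvgr_lt/(_ (3^-1) ltac:(lra)) => -[N _ HN].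
have := HN N.+3 (leq_addl 3 N); rewrite /= -invf_div exprVn.
by rewrite ltf_pV2 ?posrE ?exprn_gt0 ?divr_gt0 // ltNge ratio_le3.
Qed.

End Criticality.

Section Gamma.
Variable R : realType.
Local Notation Lv h z := (Lr R h).[z].

Definition gamma : R := sup [set z : R | 0 < z /\ subcritical z].

Lemma subcritical_lt_supercritical (x y : R) : 0 <= x ->
  supercritical x -> subcritical y -> y < x.
Proof.
move=> x0 supx suby; rewrite ltNge; apply/negP => xy.
have y0 : 0 <= y by apply: le_trans xy.
have /filter_ex[k [Lx Ly]] : \forall k \near \oo, 2^-1 < Lv k x /\ Lv k y < 2^-1.
  near=> k; split; near: k.
  - exact: supercritical_eventually_gt_half.
  - exact: subcritical_eventually_lt_half.
have := horner_Lr_le k x0 xy; lra.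
Unshelve. all: by end_near. Qed.

Lemma subcritical_half : subcritical (2^-1 : R).
Proof. by exists 0%N; rewrite horner_Lr0 horner_Lr1 expr2; split; nra. Qed.

Lemma supercritical_one : supercritical (1 : R).
Proof. by exists 0%N; rewrite horner_Lr0 horner_Lr1 expr1n; split; lra. Qed.

Let has_sup_subcritical : has_sup [set z : R | 0 < z /\ subcritical z].
Proof.
split; first by exists 2^-1; split; [lra | exact: subcritical_half].
exists 1 => z [_ subz]; apply/ltW/subcritical_lt_supercritical => //.
exact: supercritical_one.
Qed.

Lemma le_gamma (z : R) : 0 < z -> subcritical z -> z <= gamma.
Proof. by move=> z0 subz; apply: sup_upper_bound. Qed.

Lemma gamma_le (z : R) : 0 <= z -> supercritical z -> gamma <= z.
Proof.
move=> z0 supz; apply: ge_sup; first by case: has_sup_subcritical.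
by move=> y [_ suby]; apply/ltW/subcritical_lt_supercritical.
Qed.

Lemma gamma_gt0 : 0 < gamma.
Proof. by apply: lt_le_trans (le_gamma _ subcritical_half); lra. Qed.

Lemma gt_gamma_not_subcritical (y : R) : gamma < y -> ~ subcritical y.
Proof.
move=> gy suby; suff : y <= gamma by lra.
by apply: le_gamma suby; apply: lt_trans gy; exact: gamma_gt0.
Qed.

Lemma subcritical_near_gamma (eps : R) : 0 < eps ->
  exists e, [/\ 0 < e, gamma - eps < e & subcritical e].
Proof.
by move=> eps0; have [e [e0 sube] ge] := sup_adherent eps0 has_sup_subcritical; exists e.
Qed.

(* Of the two points gamma + eps/3 and gamma + 2eps/3, at most one is critical. *)
Lemma supercritical_near_gamma (eps : R) : 0 < eps ->
  exists y, [/\ gamma < y, y < gamma + eps & supercritical y].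
Proof.
move=> eps0; have g0 := gamma_gt0.
have [sup1|Nsup1] := pselect (supercritical (gamma + eps / 3)).
  by exists (gamma + eps / 3); split => //; lra.
have [sup2|Nsup2] := pselect (supercritical (gamma + eps * 2 / 3)).
  by exists (gamma + eps * 2 / 3); split => //; lra.
exfalso; apply: (critical_unique (x := gamma + eps / 3) (y := gamma + eps * 2 / 3));
  try lra.
- by split=> //; apply: gt_gamma_not_subcritical; lra.
- by split=> //; apply: gt_gamma_not_subcritical; lra.
Qed.

End Gamma.

Section Roots.
Variables (R : realType) (g : nat -> R).
Local Notation Lv h z := (Lr R h).[z].
Hypothesis g_root : forall h, 0 < g h /\ Lv h (g h) = 2^-1.

Lemma subcritical_lt_root (e : R) : 0 <= e -> subcritical e ->
  \forall h \near \oo, e < g h.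
Proof.
move=> e0 sube; near=> h; have [g0 gE] := g_root h.
have lt_half : Lv h e < 2^-1 by near: h; exact: subcritical_eventually_lt_half.
rewrite ltNge; apply/negP => ge; have := horner_Lr_le h (ltW g0) ge; lra.
Unshelve. all: by end_near. Qed.

Lemma supercritical_gt_root (y : R) : 0 <= y -> supercritical y ->
  \forall h \near \oo, g h < y.
Proof.
move=> y0 supy; near=> h; have [g0 gE] := g_root h.
have gt_half : 2^-1 < Lv h y by near: h; exact: supercritical_eventually_gt_half.
rewrite ltNge; apply/negP => ge; have := horner_Lr_le h y0 ge; lra.
Unshelve. all: by end_near. Qed.

Lemma roots_cvg_gamma : g h @[h --> \oo] --> gamma R.
Proof.
apply/cvgrPdist_lt => eps eps0.
have [e [e0 ge sube]] := subcritical_near_gamma eps0.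
have [y [gy yg supy]] := supercritical_near_gamma eps0.
have g0 := gamma_gt0 R.
near=> h; have lo : e < g h by near: h; apply: subcritical_lt_root => //; exact: ltW.
have hi : g h < y by near: h; apply: supercritical_gt_root => //; lra.
rewrite ltr_distlC; apply/andP; split; lra.
Unshelve. all: by end_near. Qed.

End Roots.

Section Growth.
Variable R : realType.
Local Notation Lv h z := (Lr R h).[z].

Lemma ell_exp_le_sum (x : R) n : 0 <= x ->
  (ell n)%:~R * x ^+ n <= \sum_(h < n.+1) Lv h x.
Proof.
move=> x0; rewrite /ell rmorph_sum mulr_suml; apply: ler_sum => h _.
by have := coef_exp_le_horner (Lr_nneg R h) n x0; rewrite coef_map.
Qed.

Lemma subcritical_ell_bounded (e : R) : 0 <= e -> subcritical e ->
  exists C, forall n, (ell n)%:~R * e ^+ n <= C.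
Proof.
move=> e0 sube; have [C sumC] := subcritical_sum_bounded e0 sube.
by exists C => n; apply: le_trans (ell_exp_le_sum n e0) (sumC _).
Qed.

Lemma ell_gamma_subexponential (kappa : R) : 1 < kappa ->
  (ell n)%:~R * gamma R ^+ n / kappa ^+ n @[n --> \oo] --> 0.
Proof.
move=> kappa1; have kappa0 : 0 < kappa by apply: lt_trans kappa1.
have g0 := gamma_gt0 R.
have eps0 : 0 < gamma R - gamma R / kappa.
  by rewrite subr_gt0 ltr_pdivrMr // ltr_pMr.
have [e [e0 ge sube]] := subcritical_near_gamma eps0.
have [C ellC] := subcritical_ell_bounded (ltW e0) sube.
pose q := gamma R / (e * kappa).
have q0 : 0 <= q by rewrite divr_ge0 ?mulr_ge0 ?ltW.
have q1 : q < 1.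
  rewrite ltr_pdivrMr ?mulr_gt0 // mul1r -ltr_pdivrMr //; lra.
apply: (@squeeze_cvgr _ _ _ _ (cst 0) (fun n => C * q ^+ n)); last 2 first.
- exact: cvg_cst.
- by rewrite -(mulr0 C); apply: cvgMr; apply: cvg_expr; rewrite ger0_norm.
near=> n.
have -> : (ell n)%:~R * gamma R ^+ n / kappa ^+ n = (ell n)%:~R * e ^+ n * q ^+ n.
  by rewrite /q expr_div_n exprMn; field; rewrite !expf_neq0 ?gt_eqF.
have en0 : 0 <= (ell n)%:~R * e ^+ n by rewrite mulr_ge0 ?ler0z ?ell_ge0 ?exprn_ge0 ?ltW.
apply/andP; split; first by rewrite mulr_ge0 ?exprn_ge0.
by rewrite ler_wpM2r ?exprn_ge0.
Unshelve. all: by end_near. Qed.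

End Growth.

Section Log2.
Variable R : realType.

Let ln2_gt0 : 0 < ln (2 : R).
Proof. by rewrite ln_gt0 ?ltr1n. Qed.

Lemma log2_ge_ratio (x : R) (p q : nat) : 0 < x -> (0 < q)%N ->
  2 ^+ p <= x ^+ q -> p%:R / q%:R <= log2 x.
Proof.
move=> x0 q0 le_pow; rewrite /log2 ler_pdivrMr ?ltr0n // mulrAC ler_pdivlMr //.
by rewrite mulrC !mulr_natr -!lnXn // ler_ln ?posrE ?exprn_gt0.
Qed.

Lemma log2_lt_ratio (x : R) (p q : nat) : 0 < x -> (0 < q)%N ->
  x ^+ q < 2 ^+ p -> log2 x < p%:R / q%:R.
Proof.
move=> x0 q0 lt_pow; rewrite /log2 ltr_pdivlMr ?ltr0n // mulrAC ltr_pdivrMr //.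
by rewrite [_ * ln 2]mulrC !mulr_natr -!lnXn // ltr_ln ?posrE ?exprn_gt0.
Qed.

Lemma log2_split (a g : R) n : 0 < a -> 0 < g ->
  log2 a = n%:R * log2 g^-1 + log2 (a * g ^+ n).
Proof.
move=> a0 g0; rewrite /log2 lnM ?posrE ?exprn_gt0 // lnXn // lnV ?posrE //.
by rewrite -mulr_natr; field; rewrite mul1r gt_eqF.
Qed.

End Log2.

HB.lock Definition binr {R : pzSemiRingType} (a : N) : R := (N.to_nat a)%:R.

Section BinaryCast.
Variable R : pzSemiRingType.
Implicit Types a b : N.

Lemma binrD a b : binr (a + b)%num = binr a + binr b :> R.
Proof. by rewrite binr.unlock N2Nat.inj_add natrD. Qed.

Lemma binrM a b : binr (a * b)%num = binr a * binr b :> R.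
Proof. by rewrite binr.unlock N2Nat.inj_mul natrM. Qed.

Lemma binrX a n : binr (a ^ N.of_nat n)%num = binr a ^+ n :> R.
Proof.
rewrite binr.unlock N2Nat.inj_pow Nat2N.id -natrX; congr _%:R.
by elim: n => //= n IH; rewrite expnS IH.
Qed.

Lemma binr_of_nat n : binr (N.of_nat n) = n%:R :> R.
Proof. by rewrite binr.unlock Nat2N.id. Qed.

End BinaryCast.

Section BinaryCastOrder.
Variable R : numDomainType.
Implicit Types a b : N.

Lemma binr_ge0 a : 0 <= binr a :> R.
Proof. by rewrite binr.unlock. Qed.

Lemma binr_gt0 a : (0 < a)%num -> 0 < binr a :> R.
Proof. by move=> a0; rewrite binr.unlock ltr0n; lia. Qed.

Lemma ler_binr a b : (binr a <= binr b :> R) = N.leb a b.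
Proof.
rewrite binr.unlock ler_nat; apply/idP/idP.
  by move=> ab; apply/N.leb_le; lia.
by move=> /N.leb_le ab; lia.
Qed.

Lemma ltr_binr a b : (binr a < binr b :> R) = N.ltb a b.
Proof.
rewrite binr.unlock ltr_nat; apply/idP/idP.
  by move=> ab; apply/N.ltb_lt; lia.
by move=> /N.ltb_lt ab; lia.
Qed.

End BinaryCastOrder.

Definition mul_up (d a b : N) : N := ((a * b + d - 1) / d)%num.
Definition mul_dn (d a b : N) : N := (a * b / d)%num.
Definition pow_up (d w : N) (n : nat) : N := iter n (mul_up d w) d.
Definition pow_dn (d w : N) (n : nat) : N := iter n (mul_dn d w) d.

Section FixedPoint.
Variables (R : numFieldType) (d : N).
Hypothesis d_gt0 : (0 < d)%num.
Implicit Types (a b : N) (u v : R).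

Definition fixr a : R := binr a / binr d.

Let binr_d_gt0 : 0 < binr d :> R := binr_gt0 R d_gt0.

Lemma fixr_ge0 a : 0 <= fixr a.
Proof. by rewrite divr_ge0 ?binr_ge0. Qed.

Lemma fixr_gt0 a : (0 < a)%num -> 0 < fixr a.
Proof. by move=> a0; rewrite divr_gt0 ?binr_gt0. Qed.

Lemma ler_fixr a b : (fixr a <= fixr b) = N.leb a b.
Proof. by rewrite ler_pM2r ?invr_gt0 // ler_binr. Qed.

Lemma ltr_fixr a b : (fixr a < fixr b) = N.ltb a b.
Proof. by rewrite ltr_pM2r ?invr_gt0 // ltr_binr. Qed.

Lemma fixrD a b : fixr (a + b)%num = fixr a + fixr b.
Proof. by rewrite /fixr binrD mulrDl. Qed.

Lemma fixr_scale : fixr d = 1.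
Proof. by rewrite /fixr divff ?gt_eqF. Qed.

Lemma fixr_mul_up a b : fixr a * fixr b <= fixr (mul_up d a b).
Proof.
have bound : (a * b <= mul_up d a b * d)%num.
  have := N.div_mod (a * b + d - 1) d ltac:(lia).
  have := N.mod_lt (a * b + d - 1) d ltac:(lia).
  rewrite /mul_up; lia.
rewrite /fixr mulrACA -invfM ler_pdivrMr ?mulr_gt0 // mulrA divfK ?gt_eqF //.
by rewrite -!binrM ler_binr; apply/N.leb_le.
Qed.

Lemma fixr_mul_dn a b : fixr (mul_dn d a b) <= fixr a * fixr b.
Proof.
have bound : (mul_dn d a b * d <= a * b)%num.
  rewrite /mul_dn N.mul_comm; apply: N.mul_div_le; lia.
rewrite /fixr mulrACA -invfM ler_pdivlMr ?mulr_gt0 // mulrA divfK ?gt_eqF //.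
by rewrite -!binrM ler_binr; apply/N.leb_le.
Qed.

Lemma pow_up_ge u w n : 0 <= u -> u <= fixr w -> u ^+ n <= fixr (pow_up d w n).
Proof.
move=> u0 uw; elim: n => [|n IH]; first by rewrite expr0 fixr_scale.
rewrite exprS /=; apply: le_trans (fixr_mul_up _ _).
by apply: ler_pM; rewrite ?exprn_ge0.
Qed.

Lemma pow_dn_le u w n : fixr w <= u -> fixr (pow_dn d w n) <= u ^+ n.
Proof.
move=> wu; elim: n => [|n IH]; first by rewrite expr0 fixr_scale.
rewrite exprS /=; apply: le_trans (fixr_mul_dn _ _) _.
by apply: ler_pM; rewrite ?fixr_ge0.
Qed.

Lemma foldl_pow_up_ge u w s : 0 <= u -> u <= fixr w ->
  u ^+ (\prod_(m <- s) m) <= fixr (foldl (pow_up d) w s).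
Proof.
elim: s u w => [|m s IH] u w u0 uw /=; first by rewrite big_nil expr1.
rewrite big_cons exprM; apply: IH; first exact: exprn_ge0.
exact: pow_up_ge.
Qed.

Lemma foldl_pow_dn_le u w s : fixr w <= u ->
  fixr (foldl (pow_dn d) w s) <= u ^+ (\prod_(m <- s) m).
Proof.
elim: s u w => [|m s IH] u w wu /=; first by rewrite big_nil expr1.
by rewrite big_cons exprM; apply: IH; exact: pow_dn_le.
Qed.

Lemma fixr_scaled a : fixr (a * d)%num = binr a.
Proof. by rewrite /fixr binrM mulfK ?gt_eqF. Qed.

Lemma fixr_le_inv a b : (0 < b)%num -> N.leb (a * b) (d * d) -> fixr a <= (fixr b)^-1.
Proof.
move=> /(binr_gt0 R) b0 ab.
by rewrite /fixr invf_div ler_pdivrMr // mulrAC ler_pdivlMr // -!binrM ler_binr.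
Qed.

Lemma inv_le_fixr a b : (0 < b)%num -> N.leb (d * d) (a * b) -> (fixr b)^-1 <= fixr a.
Proof.
move=> /(binr_gt0 R) b0 ab.
by rewrite /fixr invf_div ler_pdivlMr // mulrAC ler_pdivrMr // -!binrM ler_binr.
Qed.

Lemma fixr_ratio a (p q : nat) : (0 < q)%N ->
  (a * N.of_nat q = N.of_nat p * d)%num -> fixr a = p%:R / q%:R.
Proof.
move=> q0 E; rewrite /fixr -!(binr_of_nat R); apply/eqP.
have q_neq0 : binr (N.of_nat q) != 0 :> R by rewrite binr_of_nat pnatr_eq0 -lt0n.
by rewrite eqr_div ?q_neq0 ?(gt_eqF binr_d_gt0) // -!binrM E.
Qed.

End FixedPoint.

Definition L_step_up (d : N) (xy : N * N) : N * N := (xy.2, mul_up d xy.2 (xy.2 + xy.1)).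
Definition L_step_dn (d : N) (xy : N * N) : N * N := (xy.2, mul_dn d xy.2 (xy.2 + xy.1)).
Definition L_bounds_up (d x : N) (k : nat) : N * N := iter k (L_step_up d) (x, mul_up d x x).
Definition L_bounds_dn (d x : N) (k : nat) : N * N := iter k (L_step_dn d) (x, mul_dn d x x).

Section Certificates.
Variables (R : realType) (d : N).
Hypothesis d_gt0 : (0 < d)%num.
Local Notation Lv h z := (Lr R h).[z].
Local Notation fixr := (@fixr R d).

Lemma horner_Lr_le_fixr (z : R) x k : 0 <= z -> z <= fixr x ->
  Lv k z <= fixr (L_bounds_up d x k).1 /\
  Lv k.+1 z <= fixr (L_bounds_up d x k).2.
Proof.
move=> z0 zx; elim: k => [|k [IH1 IH2]].
  rewrite horner_Lr0 horner_Lr1 expr2; split=> //.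
  by apply: le_trans (fixr_mul_up R d_gt0 _ _) => //; apply: ler_pM.
rewrite /L_bounds_up iterS -/(L_bounds_up _ _ _) /=; split=> //.
rewrite horner_LrSS; apply: le_trans (fixr_mul_up R d_gt0 _ _) => //.
by apply: ler_pM; rewrite ?addr_ge0 ?horner_Lr_ge0 // fixrD lerD.
Qed.

Lemma fixr_le_horner_Lr (z : R) x k : fixr x <= z ->
  fixr (L_bounds_dn d x k).1 <= Lv k z /\
  fixr (L_bounds_dn d x k).2 <= Lv k.+1 z.
Proof.
move=> xz; have z0 : 0 <= z by apply: le_trans xz; exact: fixr_ge0 R d _.
elim: k => [|k [IH1 IH2]].
  rewrite horner_Lr0 horner_Lr1 expr2; split=> //.
  apply: le_trans (fixr_mul_dn R d_gt0 _ _) _ => //.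
  by apply: ler_pM; rewrite ?(fixr_ge0 R d).
rewrite /L_bounds_dn iterS -/(L_bounds_dn _ _ _) /=; split=> //.
rewrite horner_LrSS; apply: le_trans (fixr_mul_dn R d_gt0 _ _) _ => //.
by apply: ler_pM; rewrite ?(fixr_ge0 R d) // fixrD lerD.
Qed.

Let fixr_double a : fixr (a + a) = 2 * fixr a.
Proof. by rewrite fixrD mulr2n mulrDl mul1r. Qed.

Lemma subcritical_of_fixr (z : R) x k : 0 <= z -> z <= fixr x ->
  N.leb ((L_bounds_up d x k).1 + (L_bounds_up d x k).1) d ->
  N.ltb ((L_bounds_up d x k).2 + (L_bounds_up d x k).2) d -> subcritical z.
Proof.
move=> z0 zx; rewrite -(ler_fixr R d_gt0) -(ltr_fixr R d_gt0) !fixr_double fixr_scale //.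
have [Lk Lk1] := horner_Lr_le_fixr k z0 zx.
by move=> le_half lt_half; exists k; split; lra.
Qed.

Lemma supercritical_of_fixr (z : R) x k : fixr x <= z ->
  N.leb d ((L_bounds_dn d x k).1 + (L_bounds_dn d x k).1) ->
  N.ltb d ((L_bounds_dn d x k).2 + (L_bounds_dn d x k).2) -> supercritical z.
Proof.
move=> xz; rewrite -(ler_fixr R d_gt0) -(ltr_fixr R d_gt0) !fixr_double fixr_scale //.
have [Lk Lk1] := fixr_le_horner_Lr k xz.
by move=> le_half lt_half; exists k; split; lra.
Qed.

End Certificates.

Section Numerics.
Variable R : realType.
Local Notation d := (10 ^ 12)%num.
Local Notation fixr := (@fixr R d).
Let d_gt0 : (0 < d)%num. Proof. by vm_compute. Qed.

Let fixr_lo : fixr 674180000000 = 67418%:R / 100000%:R.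
Proof. by apply: fixr_ratio; [exact: d_gt0 | by [] | vm_compute]. Qed.

Lemma gamma_ge_lo : 67418%:R / 100000%:R <= gamma R.
Proof.
rewrite -fixr_lo; apply: le_gamma; first by apply: fixr_gt0; vm_compute.
by apply: (subcritical_of_fixr (k := 7) d_gt0 (fixr_ge0 _ _ _) (lexx _)); vm_compute.
Qed.

Lemma gamma_le_hi : gamma R <= fixr 674185000000.
Proof.
apply: gamma_le; first exact: fixr_ge0.
by apply: (supercritical_of_fixr (k := 6) d_gt0 (lexx _)); vm_compute.
Qed.

Lemma gamma_lt : gamma R < 67419%:R / 100000%:R.
Proof.
rewrite -(fixr_ratio R d_gt0 (a := 674190000000)); [|by []|by vm_compute].
by apply: le_lt_trans gamma_le_hi _; rewrite ltr_fixr //; vm_compute.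
Qed.

Let inv_hi_dn : N := (d * d / 674185000000)%num.
Let inv_lo_up : N := ((d * d + 674180000000 - 1) / 674180000000)%num.

Let two_exp n : 2 ^+ n = fixr (2 ^ N.of_nat n * d).
Proof. by rewrite fixr_scaled // binrX (binr_of_nat R 2). Qed.

(* Powers are rounded along 1000 = 5 * 5 * 5 * 8, which keeps the integers
   short enough for kernel computation. *)
Let exponent1000 : 1000%N = \prod_(m <- [:: 5; 5; 5; 8]) m.
Proof. by rewrite !big_cons big_nil. Qed.

Lemma log2_inv_gamma_ge : 568%:R / 1000%:R <= log2 (gamma R)^-1.
Proof.
have g0 := gamma_gt0 R.
have hi0 : 0 < fixr 674185000000 by apply: fixr_gt0; vm_compute.
have inv_hi : fixr inv_hi_dn <= (gamma R)^-1.
  apply: le_trans (fixr_le_inv R d_gt0 (b := 674185000000) _ _) _;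
    [by vm_compute | by vm_compute |].
  by rewrite lef_pV2 ?posrE // gamma_le_hi.
apply: log2_ge_ratio; [by rewrite invr_gt0 | by [] |].
rewrite two_exp exponent1000; apply: le_trans (foldl_pow_dn_le d_gt0 _ inv_hi).
by rewrite (ler_fixr R d_gt0); vm_compute.
Qed.

Lemma log2_inv_gamma_lt : log2 (gamma R)^-1 < 569%:R / 1000%:R.
Proof.
have g0 := gamma_gt0 R.
have lo0 : 0 < fixr 674180000000 by apply: fixr_gt0; vm_compute.
have inv_lo : (gamma R)^-1 <= fixr inv_lo_up.
  apply: le_trans (inv_le_fixr R d_gt0 (b := 674180000000) _ _);
    [| by vm_compute | by vm_compute].
  by rewrite lef_pV2 ?posrE // fixr_lo gamma_ge_lo.
apply: log2_lt_ratio; [by rewrite invr_gt0 | by [] |].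
rewrite two_exp exponent1000; apply: le_lt_trans (foldl_pow_up_ge d_gt0 _ _ inv_lo) _.
  by rewrite invr_ge0 ltW.
by rewrite (ltr_fixr R d_gt0); vm_compute.
Qed.

End Numerics.

Theorem theorem3 (R : realType) (gh : nat -> R)
  (Hgh : forall h : nat, 0 < gh h /\ (Lr R h).[gh h] = 2^-1) :
  exists gamma : R,
    gh n @[n --> \oo] --> gamma /\
    (67418%:R / 100000%:R <= gamma < 67419%:R / 100000%:R) /\
    (568%:R / 1000%:R <= log2 (gamma^-1) < 569%:R / 1000%:R) /\
    exists theta : nat -> R,
      (forall n : nat, (0 < n)%N ->
         0 < theta n /\
         log2 ((ell n)%:~R) = n%:R * log2 (gamma^-1) + log2 (theta n)) /\
      (forall kappa : R, 1 < kappa ->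
         theta n / kappa ^+ n @[n --> \oo] --> (0 : R)).
Proof.
have g0 := gamma_gt0 R.
exists (gamma R); split; first exact: roots_cvg_gamma.
split; first by rewrite gamma_ge_lo gamma_lt.
split; first by rewrite log2_inv_gamma_ge log2_inv_gamma_lt.
exists (fun n => (ell n)%:~R * gamma R ^+ n); split; last exact: ell_gamma_subexponential.
move=> n n0; have ell0 : 0 < (ell n)%:~R :> R by rewrite ltr0z ell_gt0.
by rewrite mulr_gt0 ?exprn_gt0 // -log2_split.
Qed.
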